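(* $\mathtt{RealTime_{CA}}\subseteq\mathtt{pred}$-$\mathtt{ESO}$-$\mathtt{HORN}$: for every cellular automaton $\mathcal A$ with parallel input, neighborhood $\{-1,0,1\}$ and first cell as output cell, there is a predecessor Horn formula $\Phi$ such that for all $w\in\Sigma^+$, $\mathcal A$ accepts $w$ in real time if and only if $\langle w\rangle\models\Phi$.
   Context: Fix a finite alphabet $\Sigma$. A nonempty word $w=w_1\cdots w_n$ is represented by the structure $\langle w\rangle=([1,n];(Q_s)_{s\in\Sigma},\mathtt{min},\mathtt{max},\mathtt{suc},\mathtt{pred})$ with $Q_s(i)\iff w_i=s$, $\mathtt{min}(i)\iff i=1$, $\mathtt{max}(i)\iff i=n$, $\mathtt{suc}(i)=\min(i+1,n)$, $\mathtt{pred}(i)=\max(i-1,1)$; $x-k$ denotes $\mathtt{pred}^k(x)$. A predecessor Horn formula is $\Phi=\exists\mathbf{R}\forall x\forall y\,\psi(x,y)$, $\mathbf{R}$ a finite set of binary relation symbols, $\psi$ a conjunction of Horn clauses in $x,y$, each of the form $\delta_1\wedge\cdots\wedge\delta_r\to\delta_0$ with $\delta_0$ an atom $R(x,y)$ ($R\in\mathbf{R}$) or $\bot$, each hypothesis being one of: $Q_s(x-a)$, $Q_s(y-a)$ ($s\in\Sigma$, $a\ge0$); $U(x-a)$, $\neg U(x-a)$, $U(y-a)$, $\neg U(y-a)$ ($U\in\{\mathtt{min},\mathtt{max}\}$, $a\ge0$); $S(x-a,y-b)$ or $S(y-b,x-a)$ ($S\in\mathbf{R}$, $a,b\ge0$).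 $\mathtt{pred}$-$\mathtt{ESO}$-$\mathtt{HORN}$ is the class of languages $\{w\in\Sigma^+:\langle w\rangle\models\Phi\}$. A cellular automaton is $(Q,\Sigma,Q_{accept},\mathcal N,\delta)$ with finite $Q\supseteq\Sigma$, $Q_{accept}\subseteq Q$, finite ordered neighborhood $\mathcal N\subseteq\mathbb Z$, $\delta:Q^{|\mathcal N|}\to Q$. On input $w$ of length $n$ it uses cells $1,\dots,n$, cells outside being permanently in a state $\sharp$; with parallel input $\langle c,1\rangle=w_c$ and $\langle c,t\rangle=\delta(\langle c+v,t-1\rangle:v\in\mathcal N)$ for $t>1$. With $\mathcal N=\{-1,0,1\}$ and output cell $1$, $\mathcal A$ accepts $w$ in real time iff $\langle 1,n\rangle\in Q_{accept}$; $\mathtt{RealTime_{CA}}$ is the class of languages so accepted. *)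

From Stdlib Require List.
From mathcomp Require Import all_boot.
Set Implicit Arguments. Unset Strict Implicit. Unset Printing Implicit Defensive.

(* Words.  w = w_1 ... w_n is a [seq Sigma] of size n; the domain of    *)
(* the structure <w> is the set of naturals 1..n, and                   *)
(*   letter w i = Some w_i  for 1 <= i <= n  (None otherwise).          *)

Definition letter (Sigma : Type) (w : seq Sigma) (i : nat) : option Sigma :=
  if 0 < i then nth None (map Some w) i.-1 else None.

Definition predk (a i : nat) : nat := maxn (i - a) 1.

(* Relation symbols are named by naturals (a formula, being a finite    *)
(* list of finite clauses, only mentions finitely many of them).        *)

Inductive fovar := VX | VY.
Inductive unpred := UMin | UMax.

Inductive hyp (Sigma : Type) :=
  | HQ   of Sigma & fovar & nat         (* Q_s(v - a) *)
  | HU   of unpred & bool & fovar & nat (* U(v - a) if true, ~U(v - a) if false *)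
  | HRxy of nat & nat & nat             (* S(x - a, y - b) : HRxy S a b *)
  | HRyx of nat & nat & nat.            (* S(y - b, x - a) : HRyx S a b *)

(* A Horn clause  d_1 /\ ... /\ d_r -> d_0 ;
   conclusion Some R means R(x,y), None means bottom. *)
Record clause (Sigma : Type) := Clause {
  c_hyps : seq (hyp Sigma);
  c_concl : option nat }.

(* Phi = exists R, forall x forall y, psi(x,y), psi = conjunction of clauses *)
Definition horn_formula (Sigma : Type) := seq (clause Sigma).

Section Semantics.
Variable Sigma : eqType.
Variable w : seq Sigma.
(* interpretation of the relation symbols: binary relations on [1,n] *)
Variable I : nat -> nat -> nat -> Prop.
Variables x y : nat.

Definition val_var (v : fovar) : nat := match v with VX => x | VY => y end.

Definition unpred_holds (U : unpred) (i : nat) : Prop :=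
  match U with UMin => i = 1 | UMax => i = size w end.

Definition hyp_holds (h : hyp Sigma) : Prop :=
  match h with
  | HQ s v a => letter w (predk a (val_var v)) = Some s
  | HU U true v a => unpred_holds U (predk a (val_var v))
  | HU U false v a => ~ unpred_holds U (predk a (val_var v))
  | HRxy R a b => I R (predk a x) (predk b y)
  | HRyx R a b => I R (predk b y) (predk a x)
  end.

Definition clause_holds (c : clause Sigma) : Prop :=
  (forall h, List.In h (c_hyps c) -> hyp_holds h) ->
  match c_concl c with Some R => I R x y | None => False end.
End Semantics.

Definition models (Sigma : eqType) (w : seq Sigma) (Phi : horn_formula Sigma) : Prop :=
  exists I : nat -> nat -> nat -> Prop,
    forall x y, 1 <= x <= size w -> 1 <= y <= size w ->
      forall c, List.In c Phi -> clause_holds w I x y c.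

(* Cellular automata with neighbourhood (-1, 0, 1), parallel input,     *)
(* output cell 1.  Q is a finite state set, Sigma is embedded in Q via  *)
(* [ca_in], [ca_sharp] is the permanent state of the cells outside      *)
(* [1,n] (we allow it to be any state of Q; taking Q to contain the     *)
(* boundary symbol is the usual convention and is no loss).             *)

Record CA (Sigma : Type) := MkCA {
  ca_Q : finType;
  ca_in : Sigma -> ca_Q;
  ca_sharp : ca_Q;
  ca_accept : pred ca_Q;
  ca_delta : ca_Q -> ca_Q -> ca_Q -> ca_Q }.

Section CARun.
Variables (Sigma : Type) (A : CA Sigma) (w : seq Sigma).
Let Q : finType := ca_Q A.
Let qin : Sigma -> Q := @ca_in Sigma A. Let qsharp : Q := @ca_sharp Sigma A.
Let qacc : pred Q := @ca_accept Sigma A. Let qdelta : Q -> Q -> Q -> Q := @ca_delta Sigma A.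

(* ca_state t c = <c, t+1>  (time shifted by one: t = 0 is time 1) *)
Fixpoint ca_state (t c : nat) : Q :=
  if 1 <= c <= size w then
    match t with
    | 0 => match letter w c with Some s => qin s | None => qsharp end
    | t'.+1 => qdelta (ca_state t' c.-1) (ca_state t' c) (ca_state t' c.+1)
    end
  else qsharp.

Definition ca_accepts_rt : Prop := qacc (ca_state (size w).-1 1).
End CARun.

(* A Horn formula can describe the real-time computation of the automaton
   once the space-time diagram is skewed: put the state <c, t> at (x, y) =
   (c + t - 1, t).  The three states that <c, t> is computed from then sit at
   (x - 2, y - 1), (x - 1, y - 1) and (x, y - 1), all reachable by [pred],
   cell 1 runs along the diagonal, and the output <1, n> sits at (n, n).  Two
   auxiliary relations, defined by recursion along [pred], recognise x = y and
   y < x.  Every clause is a local update rule of the diagram, so every model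
   contains the true diagram (induction on y); and the true diagram satisfies
   every clause except possibly the goal clauses, which forbid a rejecting
   state at (n, n). *)

From mathcomp Require Import all_boot zify.
From Stdlib Require List.
Set Implicit Arguments. Unset Strict Implicit. Unset Printing Implicit Defensive.

Lemma In_mem (T : eqType) (x : T) (s : seq T) : x \in s -> List.In x s.
Proof.
elim: s => [//|y s IHs]; rewrite in_cons => /orP [/eqP ->|/IHs]; by [left | right].
Qed.

Lemma In_enum (T : finType) (x : T) : List.In x (enum T).
Proof. by apply: In_mem; rewrite mem_enum. Qed.

Fixpoint all_prop (T : Type) (P : T -> Prop) (s : seq T) : Prop :=
  if s is x :: s' then P x /\ all_prop P s' else True.

Lemma all_propP (T : Type) (P : T -> Prop) (s : seq T) :
  (forall x, List.In x s -> P x) <-> all_prop P s.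
Proof.
elim: s => [|x s IHs] /=; first by split.
split=> [Ps | [Px /IHs Ps] y [<- // | /Ps //]].
by split; [apply: Ps; left | apply/IHs => y sy; apply: Ps; right].
Qed.

Definition concl_holds (I : nat -> nat -> nat -> Prop) (x y : nat) (o : option nat)
  : Prop :=
  if o is Some R then I R x y else False.

Lemma clause_holdsP (Sigma : eqType) (w : seq Sigma) I x y (c : clause Sigma) :
  clause_holds w I x y c <->
  (all_prop (hyp_holds w I x y) (c_hyps c) -> concl_holds I x y (c_concl c)).
Proof. by split=> holds /all_propP; apply: holds. Qed.

Lemma predk0 i : 0 < i -> predk 0 i = i.
Proof. by rewrite /predk; lia. Qed.

Lemma predk_sub a i : a < i -> predk a i = i - a.
Proof. by rewrite /predk; lia. Qed.

Lemma predk1S i : 0 < i -> predk 1 i.+1 = i.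
Proof. by rewrite /predk; lia. Qed.

Lemma letter_in_range (Sigma : Type) (w : seq Sigma) c :
  1 <= c <= size w -> exists s, letter w c = Some s.
Proof.
case: w => [|s0 w'] /= c_in; first lia.
exists (nth s0 (s0 :: w') c.-1); rewrite /letter ifT; last lia.
by rewrite (nth_map s0) //=; lia.
Qed.

Section CAState.
Variables (Sigma : Type) (A : CA Sigma) (w : seq Sigma).

Lemma ca_state_outside t c :
  ~~ (1 <= c <= size w) -> ca_state A w t c = @ca_sharp _ A.
Proof. by case: t => [|t] /= /negbTE ->. Qed.

Lemma ca_state0 c s : 1 <= c <= size w -> letter w c = Some s ->
  ca_state A w 0 c = @ca_in _ A s.
Proof. by move=> /= -> ->. Qed.

Lemma ca_stateS t c : 1 <= c <= size w ->
  ca_state A w t.+1 c =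
  @ca_delta _ A (ca_state A w t c.-1) (ca_state A w t c) (ca_state A w t c.+1).
Proof. by move=> /= ->. Qed.

End CAState.

Section Simulation.
Variables (Sigma : finType) (A : CA Sigma).
Local Notation Q := (ca_Q A).
Local Notation delta := (@ca_delta _ A).
Local Notation sharp := (@ca_sharp _ A).
Local Notation input := (@ca_in _ A).
Local Notation accept := (@ca_accept _ A).

(* Relation symbol 0 is the diagonal [x = y], 1 is [y < x], and [rstate q]
   stands for the state q. *)
Definition rstate (q : Q) : nat := (enum_rank q).+2.

Lemma rstate_inj : injective rstate.
Proof. by move=> p q [/ord_inj /enum_rank_inj]. Qed.

Definition is_min (v : fovar) : hyp Sigma := HU Sigma UMin true v 0.
Definition not_min (v : fovar) : hyp Sigma := HU Sigma UMin false v 0.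
Definition is_max (v : fovar) : hyp Sigma := HU Sigma UMax true v 0.
Definition rel (r a b : nat) : hyp Sigma := HRxy Sigma r a b.

Definition diag_first : clause Sigma := Clause [:: is_min VX; is_min VY] (Some 0).
Definition diag_next : clause Sigma :=
  Clause [:: rel 0 1 1; not_min VX; not_min VY] (Some 0).
Definition below_first : clause Sigma := Clause [:: is_min VY; not_min VX] (Some 1).
Definition below_next : clause Sigma :=
  Clause [:: rel 1 1 1; not_min VX; not_min VY] (Some 1).
Definition init_clause (s : Sigma) : clause Sigma :=
  Clause [:: is_min VY; HQ s VX 0] (Some (rstate (input s))).
Definition diag_clause (b c : Q) : clause Sigma :=
  Clause [:: not_min VY; rel 0 0 0; rel (rstate b) 1 1; rel (rstate c) 0 1]
    (Some (rstate (delta sharp b c))).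
Definition step_clause (a b c : Q) : clause Sigma :=
  Clause [:: not_min VY; rel 1 0 0; rel (rstate a) 2 1; rel (rstate b) 1 1;
             rel (rstate c) 0 1]
    (Some (rstate (delta a b c))).
Definition reject_clause (q : Q) : clause Sigma :=
  Clause [:: is_max VX; is_max VY; rel (rstate q) 0 0] None.

Inductive sim_clause : clause Sigma -> Prop :=
  | SimDiagFirst : sim_clause diag_first
  | SimDiagNext : sim_clause diag_next
  | SimBelowFirst : sim_clause below_first
  | SimBelowNext : sim_clause below_next
  | SimInit s : sim_clause (init_clause s)
  | SimDiag b c : sim_clause (diag_clause b c)
  | SimStep a b c : sim_clause (step_clause a b c)
  | SimReject q : ~~ accept q -> sim_clause (reject_clause q).

Definition sim_formula : horn_formula Sigma :=
  ([:: diag_first; diag_next; below_first; below_next] ++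
   List.map init_clause (enum Sigma) ++
   List.flat_map (fun b => List.map (diag_clause b) (enum Q)) (enum Q) ++
   List.flat_map (fun a => List.flat_map (fun b =>
     List.map (step_clause a b) (enum Q)) (enum Q)) (enum Q) ++
   List.map reject_clause (List.filter (fun q => ~~ accept q) (enum Q)))%list.

Lemma In_sim_formula d : List.In d sim_formula <-> sim_clause d.
Proof.
rewrite /sim_formula /= !List.in_app_iff List.in_map_iff !List.in_flat_map.
split=> [|[||||s|b c|a b c|q q_rej]].
- move=> [<-|[<-|[<-|[<-|]]]]; try constructor.
  move=> [[s [<- _]] | [[b [_ /List.in_map_iff [c [<- _]]]] |
         [[a [_ /List.in_flat_map [b [_ /List.in_map_iff [c [<- _]]]]]] |
          /List.in_map_iff [q [<- /List.filter_In [_ q_rej]]]]]]; by constructor.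
- by left.
- by right; left.
- by do 2 right; left.
- by do 3 right; left.
- by do 4 right; left; exists s; split; last exact: In_enum.
- do 5 right; left; exists b; split; first exact: In_enum.
  by apply: List.in_map; exact: In_enum.
- do 6 right; left; exists a; split; first exact: In_enum.
  apply/List.in_flat_map; exists b; split; first exact: In_enum.
  by apply: List.in_map; exact: In_enum.
- do 7 right; apply: List.in_map.
  by apply/List.filter_In; split; first exact: In_enum.
Qed.

Variable w : seq Sigma.
Local Notation n := (size w).

(* [diagram x y] is the state <x + 1 - y, y>. *)
Definition diagram (x y : nat) : Q := ca_state A w (y - 1) (x + 1 - y).

Lemma diagramE t c x y : y = t.+1 -> x = c + t -> diagram x y = ca_state A w t c.
Proof. by move=> -> ->; rewrite /diagram; congr ca_state; lia. Qed.

Lemma diagram_output : diagram n n = ca_state A w n.-1 1.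
Proof. by rewrite /diagram; congr ca_state; lia. Qed.

Lemma diagram_init x s : 1 <= x <= n -> letter w x = Some s -> diagram x 1 = input s.
Proof. by move=> x_in wx; rewrite /diagram subnn addnK (ca_state0 _ x_in wx). Qed.

Lemma diagram_diag x : 2 <= x <= n ->
  diagram x x = delta sharp (diagram (x - 1) (x - 1)) (diagram x (x - 1)).
Proof.
move=> x_in.
rewrite (@diagramE (x - 2).+1 1 x x) 1?(@diagramE (x - 2) 1 (x - 1))
  1?(@diagramE (x - 2) 2 x); try lia.
by rewrite ca_stateS ?(@ca_state_outside _ _ _ _ 0) //; lia.
Qed.

Lemma diagram_step x y : 2 <= y < x -> x <= n ->
  diagram x y =
  delta (diagram (x - 2) (y - 1)) (diagram (x - 1) (y - 1)) (diagram x (y - 1)).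
Proof.
move=> y_in x_le; set c := x + 1 - y.
rewrite (@diagramE (y - 2).+1 c x y) 1?(@diagramE (y - 2) c.-1 (x - 2))
  1?(@diagramE (y - 2) c (x - 1)) 1?(@diagramE (y - 2) c.+1 x); rewrite /c; try lia.
by rewrite ca_stateS //; lia.
Qed.

Definition diagram_interp (r x y : nat) : Prop :=
  match r with 0 => x = y | 1 => y < x | _ => r = rstate (diagram x y) end.

Lemma diagram_interp_holds x y d : 1 <= x <= n -> 1 <= y <= n ->
  accept (diagram n n) -> sim_clause d -> clause_holds w diagram_interp x y d.
Proof.
move=> x_in y_in acc; case=> [||||s|b c|a b c|q q_rej]; apply/clause_holdsP => /=.
all: rewrite ?predk0; try lia.
- by rewrite /predk; lia.
- by rewrite /predk; lia.
- by move=> [-> [wx _]]; rewrite (diagram_init x_in wx).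
- move=> [y_ne1 [x_eq_y [/rstate_inj -> [/rstate_inj -> _]]]]; subst x.
  by rewrite predk_sub; [rewrite (@diagram_diag y) //; lia | lia].
- move=> [y_ne1 [y_lt_x [/rstate_inj -> [/rstate_inj -> [/rstate_inj -> _]]]]].
  by rewrite !predk_sub; try lia; rewrite (@diagram_step x y) //; lia.
- by move=> [-> [-> [/rstate_inj q_nn _]]]; rewrite q_nn acc in q_rej.
Qed.

Section Completeness.
Variable I : nat -> nat -> nat -> Prop.
Hypothesis I_models : forall x y, 1 <= x <= n -> 1 <= y <= n ->
  forall d, List.In d sim_formula -> clause_holds w I x y d.

Lemma model_fires d x y : sim_clause d -> 1 <= x <= n -> 1 <= y <= n ->
  all_prop (hyp_holds w I x y) (c_hyps d) -> concl_holds I x y (c_concl d).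
Proof.
by move=> /In_sim_formula d_in x_in y_in; apply/clause_holdsP; apply: I_models.
Qed.

Lemma model_diag y : 1 <= y <= n -> I 0 y y.
Proof.
elim: y => [|y IHy] y_in; first lia.
have [-> | y_gt0] := posnP y.
  by apply: (model_fires SimDiagFirst) => //=; rewrite /predk; lia.
apply: (model_fires SimDiagNext) => //=; rewrite predk0 // predk1S //.
by do !split; try lia; apply: IHy; lia.
Qed.

Lemma model_below y x : 1 <= y < x -> x <= n -> I 1 x y.
Proof.
elim: y x => [|y IHy] x y_lt_x x_le; first lia.
have [-> | y_gt0] := posnP y.
  by apply: (model_fires SimBelowFirst) => //=; rewrite /predk; lia.
apply: (model_fires SimBelowNext) => //=; try lia.
rewrite predk1S // !predk0 ?(@predk_sub 1 x); try lia.
by do !split; try lia; apply: IHy; lia.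
Qed.

Lemma model_state_init x : 1 <= x <= n -> I (rstate (diagram x 1)) x 1.
Proof.
move=> x_in; have [s wx] := letter_in_range x_in.
rewrite (diagram_init x_in wx).
apply: (model_fires (SimInit s)) => /=; try lia.
by rewrite !predk0; try lia.
Qed.

Lemma model_state y x : 1 <= y <= x -> x <= n -> I (rstate (diagram x y)) x y.
Proof.
elim: y x => [|y IHy] x y_le_x x_le; first lia.
have [-> | y_gt0] := posnP y; first by apply: model_state_init; lia.
case: (ltngtP y.+1 x) => [y_lt_x | x_lt_y | <-]; [| lia |].
- rewrite (@diagram_step x y.+1); try lia; rewrite subn1 /=.
  apply: (model_fires (SimStep _ _ _)) => //=; try lia.
  rewrite predk1S // !predk0 ?(@predk_sub 1 x) ?(@predk_sub 2 x); try lia.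
  by do !split; try lia; [apply: model_below | apply: IHy ..]; lia.
- rewrite (@diagram_diag y.+1); try lia; rewrite subn1 /=.
  apply: (model_fires (SimDiag _ _)) => //=; try lia.
  rewrite predk1S // !predk0; try lia.
  by do !split; try lia; [apply: model_diag | apply: IHy ..]; lia.
Qed.

Lemma model_accepts : 0 < n -> accept (diagram n n).
Proof.
move=> n_gt0; case: (boolP (accept _)) => // rejected; exfalso.
apply: (@model_fires _ n n (SimReject rejected)) => /=; try lia.
by rewrite !predk0 //; do !split => //; apply: model_state; lia.
Qed.

End Completeness.
End Simulation.

Theorem lemma3 (Sigma : finType) (A : CA Sigma) :
  exists Phi : horn_formula Sigma,
    forall w : seq Sigma, 0 < size w ->
      (ca_accepts_rt A w <-> models w Phi).
Proof.
exists (sim_formula A) => w w_ne0; rewrite /ca_accepts_rt -diagram_output.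
split=> [acc | [I I_models]]; last exact: model_accepts I_models w_ne0.
exists (diagram_interp A w) => x y x_in y_in d /In_sim_formula.
exact: diagram_interp_holds x_in y_in acc.
Qed.
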